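(* Let $\mathcal{F},G:\mathbb{R}^p\times\mathbb{R}^q\to\mathbb{R}$ satisfy the standing assumptions (A1) and (A2) with constants $L>0$ and $M<\infty$, and fix $\delta>0$ and $\xi\in(0,1)$. Fix the total number of iterations $T\ge 1$ and constants $c>0$, $C>0$. Suppose the learning rates are constant in $t$, with $\eta_\alpha^{(t)}=\eta_\alpha=\frac{c}{T}$ where $\frac{c}{T}<1$, and $\eta_w^{(t)}=\eta_w=\frac{C}{\sqrt T}$ where $$\frac{C}{\sqrt T}<\min\Big(\frac{1-\xi}{L},\,1\Big).$$ Let $(w^t,\alpha^t)_{t\ge1}$ be generated by the EBOMLC iteration from an arbitrary initial point $(w^1,\alpha^1)$. Then there is a constant $H$ depending only on $M,L,\delta,\xi,c,C$ (and on $\mathcal{F}(w^1,\alpha^1)$), but not on $T$, such that $$\min_{1\le t\le T}\big\|\nabla_w\mathcal{F}(w^t,\alpha^t)\big\|^2\le \frac{H}{\sqrt T}.$$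
   Context: Notation: $\|\cdot\|$ is the Euclidean norm; for a function $\Phi(w,\alpha)$ of $(w,\alpha)\in\mathbb{R}^p\times\mathbb{R}^q$, $\nabla\Phi=(\nabla_w\Phi,\nabla_\alpha\Phi)$ denotes the full gradient in the joint variable. Standing assumptions. (A1) $\mathcal{F}$ and $G$ are differentiable on $\mathbb{R}^p\times\mathbb{R}^q$ and $\nabla\mathcal{F}$, $\nabla G$ are $L$-Lipschitz with respect to the joint variable $(w,\alpha)$, for some $L>0$. (A2) There is a finite $M$ such that for all $(w,\alpha)$: $|\mathcal{F}(w,\alpha)|\le M$, $|G(w,\alpha)|\le M$, $\|\nabla\mathcal{F}(w,\alpha)\|\le M$, $\|\nabla G(w,\alpha)\|\le M$. EBOMLC iteration. Fix constants $\delta>0$, $\xi\in(0,1)$ and positive learning rates $\eta_w^{(t)},\eta_\alpha^{(t)}$. Given $(w^t,\alpha^t)$, set $w^t_{(1)}=w^t-\eta_w^{(t)}\nabla_wG(w^t,\alpha^t)$ and define $\mathcal{Q}_t(w,\alpha)=G(w,\alpha)-G(w^t_{(1)},\alpha)$, where $w^t_{(1)}$ is treated as a constant when differentiating, so that $$\nabla\mathcal{Q}(w^t,\alpha^t):=\nabla G(w^t,\alpha^t)-\nabla G(w^t_{(1)},\alpha^t),$$ with components $\nabla_w\mathcal{Q},\nabla_\alpha\mathcal{Q}$. Define $$\bar\beta_t=\max\Big(\delta-\frac{\nabla_w\mathcal{F}(w^t,\alpha^t)^T\nabla_w\mathcal{Q}(w^t,\alpha^t)}{\|\nabla\mathcal{Q}(w^t,\alpha^t)\|^2},\,0\Big)$$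 if $\nabla\mathcal{Q}(w^t,\alpha^t)\neq0$, and $\bar\beta_t=0$ otherwise. Then update $$w^{t+1}=w^t-\eta_w^{(t)}\big(\nabla_w\mathcal{F}(w^t,\alpha^t)+\xi\bar\beta_t\nabla_w\mathcal{Q}(w^t,\alpha^t)\big),$$ $$\alpha^{t+1}=\alpha^t-\eta_\alpha^{(t)}\big(\nabla_\alpha\mathcal{F}(w^t,\alpha^t)+\xi\bar\beta_t\nabla_\alpha\mathcal{Q}(w^t,\alpha^t)\big).$$ (In the paper $w$ are main-model parameters, $\alpha$ meta-model parameters, $\mathcal{F}$ a mixture upper loss and $G$ a lower loss, but only (A1), (A2) are used.) *)

From HB Require Import structures.
From mathcomp Require Import all_boot all_order all_algebra.
From mathcomp Require Import all_classical all_reals all_analysis.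
Set Implicit Arguments. Unset Strict Implicit. Unset Printing Implicit Defensive.
Import Order.TTheory GRing.Theory Num.Theory.
Import numFieldNormedType.Exports.
Local Open Scope ring_scope.

Section Defs.
Variable R : realType.

Definition dotv (n : nat) (u v : 'rV[R]_n) : R := \sum_(i < n) u 0 i * v 0 i.
Definition nrm2 (n : nat) (u : 'rV[R]_n) : R := dotv u u.

Variables p q : nat.

Definition jnrm2 (u : 'rV[R]_p) (v : 'rV[R]_q) : R := nrm2 u + nrm2 v.
Definition jnrm (u : 'rV[R]_p) (v : 'rV[R]_q) : R := Num.sqrt (jnrm2 u v).

Definition has_grad (Phi : 'rV[R]_p -> 'rV[R]_q -> R)
  (gw : 'rV[R]_p -> 'rV[R]_q -> 'rV[R]_p) (ga : 'rV[R]_p -> 'rV[R]_q -> 'rV[R]_q) : Prop :=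
  forall (w : 'rV[R]_p) (a : 'rV[R]_q),
    differentiable (fun x : 'rV[R]_p * 'rV[R]_q => Phi x.1 x.2) (w, a) /\
    forall h : 'rV[R]_p * 'rV[R]_q,
      'd (fun x : 'rV[R]_p * 'rV[R]_q => Phi x.1 x.2) (w, a) h = dotv (gw w a) h.1 + dotv (ga w a) h.2.

Definition grad_lipschitz (gw : 'rV[R]_p -> 'rV[R]_q -> 'rV[R]_p)
  (ga : 'rV[R]_p -> 'rV[R]_q -> 'rV[R]_q) (L : R) : Prop :=
  forall w a w' a',
    jnrm (gw w a - gw w' a') (ga w a - ga w' a') <= L * jnrm (w - w') (a - a').

Section Step.
Variables (Fw : 'rV[R]_p -> 'rV[R]_q -> 'rV[R]_p) (Fa : 'rV[R]_p -> 'rV[R]_q -> 'rV[R]_q).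
Variables (Gw : 'rV[R]_p -> 'rV[R]_q -> 'rV[R]_p) (Ga : 'rV[R]_p -> 'rV[R]_q -> 'rV[R]_q).
Variables (delta xi etaw etaa : R).

Definition w_one (w : 'rV[R]_p) (a : 'rV[R]_q) : 'rV[R]_p := w - etaw *: Gw w a.
Definition gradQw (w : 'rV[R]_p) (a : 'rV[R]_q) : 'rV[R]_p := Gw w a - Gw (w_one w a) a.
Definition gradQa (w : 'rV[R]_p) (a : 'rV[R]_q) : 'rV[R]_q := Ga w a - Ga (w_one w a) a.

Definition beta_bar (w : 'rV[R]_p) (a : 'rV[R]_q) : R :=
  if jnrm2 (gradQw w a) (gradQa w a) != 0 then
    Num.max (delta - dotv (Fw w a) (gradQw w a) / jnrm2 (gradQw w a) (gradQa w a)) 0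
  else 0.

Definition ebomlc_w (w : 'rV[R]_p) (a : 'rV[R]_q) : 'rV[R]_p :=
  w - etaw *: (Fw w a + (xi * beta_bar w a) *: gradQw w a).
Definition ebomlc_a (w : 'rV[R]_p) (a : 'rV[R]_q) : 'rV[R]_q :=
  a - etaa *: (Fa w a + (xi * beta_bar w a) *: gradQa w a).
End Step.
End Defs.

(* Since the joint gradient of F is L-Lipschitz, one EBOMLC step decreases F by
   eta_w (1 - xi) |grad_w F|^2 up to an error (eta_w^2 + eta_alpha) K.  The correction
   direction is harmless: grad Q = grad G(w) - grad G(w - eta_w grad_w G) has norm
   O(eta_w), so <grad_w F, grad_w Q> = O(eta_w) by Cauchy-Schwarz, while
   beta^2 |grad Q|^2 stays bounded.  Summing T steps, with T eta_w = C sqrt T and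
   T (eta_w^2 + eta_alpha) = C^2 + c, the smallest |grad_w F|^2 is at most
   (F(w^1, alpha^1) + M + (C^2 + c) K) / ((1 - xi) C sqrt T). *)

From HB Require Import structures.
From mathcomp Require Import all_boot all_order all_algebra.
From mathcomp Require Import all_classical all_reals all_analysis.
From mathcomp Require Import ring lra.
Import Order.TTheory GRing.Theory Num.Theory.
Import numFieldNormedType.Exports.
Local Open Scope ring_scope.
Set Implicit Arguments. Unset Strict Implicit.

Section Euclid.
Variables (R : realType) (n : nat).
Implicit Types (u v x y : 'rV[R]_n) (k t : R).

Lemma nrm2_ge0 u : 0 <= nrm2 u.
Proof. by apply: sumr_ge0 => i _; rewrite -expr2 sqr_ge0. Qed.

Lemma dotvC u v : dotv u v = dotv v u.
Proof. by apply: eq_bigr => i _; rewrite mulrC. Qed.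

Lemma dotvDr u x y : dotv u (x + y) = dotv u x + dotv u y.
Proof. by rewrite /dotv -big_split; apply: eq_bigr => i _; rewrite mxE mulrDr. Qed.

Lemma dotvZr u x k : dotv u (k *: x) = k * dotv u x.
Proof. by rewrite /dotv mulr_sumr; apply: eq_bigr => i _; rewrite mxE mulrCA. Qed.

Lemma dotvNr u x : dotv u (- x) = - dotv u x.
Proof. by rewrite -scaleN1r dotvZr mulN1r. Qed.

Lemma dotvBl x y u : dotv (x - y) u = dotv x u - dotv y u.
Proof. by rewrite dotvC dotvDr dotvNr !(dotvC u). Qed.

Lemma nrm2Z k u : nrm2 (k *: u) = k ^+ 2 * nrm2 u.
Proof. by rewrite /nrm2 dotvZr dotvC dotvZr mulrA expr2. Qed.

Lemma nrm2N u : nrm2 (- u) = nrm2 u.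
Proof. by rewrite -scaleN1r nrm2Z expr2 mulN1r opprK mul1r. Qed.

Lemma nrm2_0 : nrm2 (0 : 'rV[R]_n) = 0.
Proof. by rewrite -(scale0r (0 : 'rV[R]_n)) nrm2Z expr0n mul0r. Qed.

Lemma nrm2D_le x y : nrm2 (x + y) <= 2 * nrm2 x + 2 * nrm2 y.
Proof.
rewrite /nrm2 /dotv !mulr_sumr -big_split; apply: ler_sum => i _ /=.
rewrite !mxE; have := sqr_ge0 (x 0 i - y 0 i); rewrite expr2; nra.
Qed.

Lemma dotv_amgm t u v : 2 * t * dotv u v <= t ^+ 2 * nrm2 v + nrm2 u.
Proof.
rewrite /nrm2 /dotv !mulr_sumr -big_split; apply: ler_sum => i _ /=.
have := sqr_ge0 (u 0 i - t * v 0 i); rewrite !expr2; nra.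
Qed.

Lemma dotv_sqr_le u v : dotv u v ^+ 2 <= nrm2 u * nrm2 v.
Proof.
have [v0|v_neq0] := eqVneq (nrm2 v) 0.
  suff -> : dotv u v = 0 by rewrite v0 expr2 !mulr0.
  have v_eq0 i : v 0 i = 0.
    apply/eqP; rewrite -sqrf_eq0 expr2; apply/eqP.
    by move/psumr_eq0P: v0; apply=> // j _; rewrite -expr2 sqr_ge0.
  by apply: big1 => i _; rewrite v_eq0 mulr0.
have v_gt0 : 0 < nrm2 v by rewrite lt_def v_neq0 nrm2_ge0.
have := dotv_amgm (dotv u v / nrm2 v) u v.
set r := dotv u v => h.
suff -> : r ^+ 2 = (2 * (r / nrm2 v) * r - (r / nrm2 v) ^+ 2 * nrm2 v) * nrm2 v.
  by rewrite ler_pM2r //; lra.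
by field; rewrite gt_eqF.
Qed.

End Euclid.

Section Joint.
Variables (R : realType) (p q : nat).
Implicit Types (u : 'rV[R]_p) (v : 'rV[R]_q).

Lemma jnrm2_ge0 u v : 0 <= jnrm2 u v.
Proof. by rewrite addr_ge0 ?nrm2_ge0. Qed.

Lemma jnrm2_ge_l u v : nrm2 u <= jnrm2 u v.
Proof. by rewrite lerDl nrm2_ge0. Qed.

Lemma jnrm2_ge_r u v : nrm2 v <= jnrm2 u v.
Proof. by rewrite lerDr nrm2_ge0. Qed.

Lemma jnrm_le_sqr u v k u' v' : 0 <= k -> jnrm u v <= k * jnrm u' v' ->
  jnrm2 u v <= k ^+ 2 * jnrm2 u' v'.
Proof.
move=> k_ge0 uv_le; rewrite -ler_sqrt ?mulr_ge0 ?sqr_ge0 ?jnrm2_ge0 //.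
by rewrite sqrtrM ?sqr_ge0 // sqrtr_sqr ger0_norm.
Qed.

Lemma jnrm_le u v M : jnrm u v <= M -> jnrm2 u v <= M ^+ 2.
Proof.
move=> uvM; have M_ge0 : 0 <= M := le_trans (sqrtr_ge0 _) uvM.
by rewrite -(sqr_sqrtr (jnrm2_ge0 u v)) ler_sqr ?nnegrE ?sqrtr_ge0.
Qed.

End Joint.

Lemma derive_along_line (R : realType) (V : normedModType R) (f : V -> R) (x v : V) (s : R) :
  differentiable f (s *: v + x) ->
  is_derive s 1 (fun t : R => f (t *: v + x)) ('d f (s *: v + x) v).
Proof.
move=> df.
have E : (fun h : R => h^-1 *: (((fun t => f (t *: v + x)) \o shift s) (h *: 1) - f (s *: v + x)))
   = (fun h : R => h^-1 *: ((f \o shift (s *: v + x)) (h *: v) - f (s *: v + x))).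
  by apply/funext => h /=; rewrite /shift /= [h *: 1]mulr1 scalerDl addrA.
apply: DeriveDef; first by rewrite /derivable E; exact: diff_derivable.
by rewrite /derive E -deriveE.
Qed.

Section Descent.
Variables (R : realType) (p q : nat) (Phi : 'rV[R]_p -> 'rV[R]_q -> R).
Variables (gw : 'rV[R]_p -> 'rV[R]_q -> 'rV[R]_p) (ga : 'rV[R]_p -> 'rV[R]_q -> 'rV[R]_q).

Lemma has_grad_mvt w a dw da : has_grad Phi gw ga ->
  exists2 c : R, 0 < c < 1 &
    Phi (w + dw) (a + da) - Phi w a =
    dotv (gw (c *: dw + w) (c *: da + a)) dw + dotv (ga (c *: dw + w) (c *: da + a)) da.
Proof.
move=> gradPhi; pose f (x : 'rV[R]_p * 'rV[R]_q) := Phi x.1 x.2.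
have df (x : 'rV[R]_p * 'rV[R]_q) : differentiable f x by case: x => x1 x2; case: (gradPhi x1 x2).
have der s := @derive_along_line _ _ f (w, a) (dw, da) s (df _).
have [|c] := MVT ltr01 (fun s _ => der s).
  apply: continuous_subspaceT => s; apply: differentiable_continuous.
  by apply/derivable1_diffP; exact: (@ex_derive _ _ _ _ _ _ _ (der s)).
rewrite in_itv /= subr0 mulr1 /f /= !scale1r !scale0r !add0r (addrC dw) (addrC da) => c01 ->.
by exists c => //; case: (gradPhi (c *: dw + w) (c *: da + a)) => _ ->.
Qed.

Lemma grad_lipschitz_dot_le L w a dw da c : 0 < L -> grad_lipschitz gw ga L -> 0 <= c <= 1 ->
  dotv (gw (c *: dw + w) (c *: da + a) - gw w a) dw
  + dotv (ga (c *: dw + w) (c *: da + a) - ga w a) da <= L * jnrm2 dw da.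
Proof.
move=> L_gt0 lip /andP[c_ge0 c_le1].
have := jnrm_le_sqr (ltW L_gt0) (lip (c *: dw + w) (c *: da + a) w a).
rewrite !addrK /jnrm2 !nrm2Z.
have := dotv_amgm L (gw (c *: dw + w) (c *: da + a) - gw w a) dw.
have := dotv_amgm L (ga (c *: dw + w) (c *: da + a) - ga w a) da.
have := nrm2_ge0 dw; have := nrm2_ge0 da.
set X := dotv _ dw; set Y := dotv _ da; set N1 := nrm2 dw; set N2 := nrm2 da.
set D1 := nrm2 (_ - gw w a); set D2 := nrm2 (_ - ga w a) => N2_ge0 N1_ge0 hY hX hD.
have c2_le1 : c ^+ 2 <= 1 by rewrite expr_le1.
have hc : L ^+ 2 * (c ^+ 2 * N1 + c ^+ 2 * N2) <= L ^+ 2 * (N1 + N2).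
  by rewrite -mulrDr ler_wpM2l ?sqr_ge0 // -[X in _ <= X]mul1r ler_wpM2r ?addr_ge0.
rewrite -(ler_pM2l (mulr_gt0 (@ltr0Sn _ 1) L_gt0)); rewrite expr2 in hX hY hc; lra.
Qed.

Lemma descent_lemma L w a dw da : has_grad Phi gw ga -> 0 < L -> grad_lipschitz gw ga L ->
  Phi (w + dw) (a + da) <= Phi w a + (dotv (gw w a) dw + dotv (ga w a) da) + L * jnrm2 dw da.
Proof.
move=> gradPhi L_gt0 lip; have [c /andP[c_gt0 c_lt1] mvt] := has_grad_mvt w a dw da gradPhi.
have := grad_lipschitz_dot_le w a dw da L_gt0 lip (introT andP (conj (ltW c_gt0) (ltW c_lt1))).
rewrite !dotvBl; lra.
Qed.

End Descent.

Definition dual_weight (R : realType) (delta r N : R) : R :=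
  if N != 0 then Num.max (delta - r / N) 0 else 0.

Section DualWeight.
Variables (R : realType) (delta r N n : R).
Hypotheses (delta_ge0 : 0 <= delta) (N_ge0 : 0 <= N) (n_ge0 : 0 <= n) (r_sqr_le : r ^+ 2 <= n * N).

Lemma dual_weight_ge0 : 0 <= dual_weight delta r N.
Proof. by rewrite /dual_weight; case: ifP => _; rewrite ?le_max lexx ?orbT. Qed.

Lemma dual_weight_cases :
  dual_weight delta r N = 0 \/ [/\ 0 < N, r ^+ 2 / N <= n & dual_weight delta r N = delta - r / N].
Proof.
rewrite /dual_weight; have [|N_neq0] := eqVneq N 0; [by left | rewrite /=].
have N_gt0 : 0 < N by rewrite lt_def N_neq0.
have [le0|gt0] := leP (delta - r / N) 0; [by left | right].
by split; rewrite ?ler_pdivrMr.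
Qed.

Lemma dual_weight_sqr_le :
  dual_weight delta r N ^+ 2 * N <= delta ^+ 2 * N + 2 * delta * `|r| + n.
Proof.
have r_le := ler_norm (- r); rewrite normrN in r_le.
have rest_ge0 : 0 <= delta ^+ 2 * N + 2 * delta * `|r| + n.
  by rewrite !addr_ge0 ?mulr_ge0 ?sqr_ge0.
case: dual_weight_cases => [-> | [N_gt0 rN_le ->]]; first by rewrite expr0n mul0r.
have -> : (delta - r / N) ^+ 2 * N = delta ^+ 2 * N - 2 * delta * r + r ^+ 2 / N.
  by field; rewrite gt_eqF.
have : - (2 * delta * r) <= 2 * delta * `|r| by rewrite -mulrN ler_wpM2l ?mulr_ge0.
lra.
Qed.

Lemma dual_weight_dot_ge xi : 0 <= xi <= 1 ->
  (1 - xi) * n - delta * `|r| <= n + xi * dual_weight delta r N * r.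
Proof.
move=> /andP[xi_ge0 xi_le1].
have dr_ge0 : 0 <= delta * `|r| by rewrite mulr_ge0.
case: dual_weight_cases => [-> | [N_gt0 rN_le ->]].
  have : 0 <= xi * n by rewrite mulr_ge0.
  rewrite mulr0 mul0r addr0; lra.
rewrite -mulrA.
have -> : (delta - r / N) * r = delta * r - r ^+ 2 / N by field; rewrite gt_eqF.
have dr_le : - (xi * (delta * r)) <= delta * `|r|.
  rewrite -mulrN (le_trans (ler_wpM2l xi_ge0 (_ : _ <= delta * `|r|))) //.
    by rewrite -mulrN ler_wpM2l // -normrN ler_norm.
  by rewrite ler_piMl.
have : xi * (r ^+ 2 / N) <= xi * n by rewrite ler_wpM2l.
rewrite mulrBr; lra.
Qed.

End DualWeight.

Definition weight_bound (R : realType) (L M delta : R) : R := ((delta * L + 1) * M) ^+ 2.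

(* Per unit of [e ^+ 2 + h]: the alignment term, the alpha part of the first-order term,
   and the quadratic term of the descent lemma. *)
Definition step_const (R : realType) (L M delta : R) : R :=
  delta * L * M ^+ 2 + weight_bound L M delta + 2 * L * (M ^+ 2 + weight_bound L M delta).

Lemma beta_barE (R : realType) p q Fw Gw Ga (delta e : R) (w : 'rV[R]_p) (a : 'rV[R]_q) :
  beta_bar Fw Gw Ga delta e w a =
  dual_weight delta (dotv (Fw w a) (gradQw Gw e w a)) (jnrm2 (gradQw Gw e w a) (gradQa Gw Ga e w a)).
Proof. by []. Qed.

Section Step.
Variables (R : realType) (p q : nat) (F : 'rV[R]_p -> 'rV[R]_q -> R).
Variables (Fw Gw : 'rV[R]_p -> 'rV[R]_q -> 'rV[R]_p) (Fa Ga : 'rV[R]_p -> 'rV[R]_q -> 'rV[R]_q).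
Variables (L M delta xi e h : R) (w : 'rV[R]_p) (a : 'rV[R]_q).
Hypotheses (gradF : has_grad F Fw Fa) (L_gt0 : 0 < L).
Hypotheses (lipF : grad_lipschitz Fw Fa L) (lipG : grad_lipschitz Gw Ga L).
Hypotheses (FM : forall w a, jnrm (Fw w a) (Fa w a) <= M) (GM : forall w a, jnrm (Gw w a) (Ga w a) <= M).
Hypotheses (delta_ge0 : 0 <= delta) (xi_ge0 : 0 <= xi) (xi_le1 : xi <= 1).
Hypotheses (e_ge0 : 0 <= e) (e_le1 : e <= 1) (h_ge0 : 0 <= h) (h_le1 : h <= 1).

Local Notation Qw := (gradQw Gw e w a).
Local Notation Qa := (gradQa Gw Ga e w a).
Local Notation beta := (beta_bar Fw Gw Ga delta e w a).

Let M_ge0 : 0 <= M.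
Proof. exact: le_trans (sqrtr_ge0 _) (FM w a). Qed.

Lemma gradQ_sqr_le : jnrm2 Qw Qa <= (L * e * M) ^+ 2.
Proof.
have step : w - w_one Gw e w a = e *: Gw w a by rewrite /w_one opprB addrC subrK.
have := jnrm_le_sqr (ltW L_gt0) (lipG w a (w_one Gw e w a) a).
rewrite step subrr /jnrm2 nrm2Z nrm2_0 addr0 => /le_trans; apply.
rewrite !exprMn -mulrA ler_wpM2l ?sqr_ge0 // ler_wpM2l ?sqr_ge0 //.
exact: le_trans (jnrm2_ge_l _ _) (jnrm_le (GM w a)).
Qed.

Let nrm2_Fw_le : nrm2 (Fw w a) <= M ^+ 2.
Proof. exact: le_trans (jnrm2_ge_l _ _) (jnrm_le (FM w a)). Qed.

Let dot_gradQ_sqr_le : dotv (Fw w a) Qw ^+ 2 <= nrm2 (Fw w a) * jnrm2 Qw Qa.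
Proof. exact: le_trans (dotv_sqr_le _ _) (ler_wpM2l (nrm2_ge0 _) (jnrm2_ge_l _ _)). Qed.

Lemma dot_gradQ_le : `|dotv (Fw w a) Qw| <= L * e * M ^+ 2.
Proof.
suff : `|dotv (Fw w a) Qw| ^+ 2 <= (L * e * M ^+ 2) ^+ 2.
  by rewrite ler_sqr // qualifE /= ?normr_ge0 // !mulr_ge0 ?sqr_ge0 // ltW.
rewrite real_normK ?num_real //; apply: le_trans dot_gradQ_sqr_le _.
have -> : (L * e * M ^+ 2) ^+ 2 = M ^+ 2 * (L * e * M) ^+ 2 by ring.
exact: ler_pM (nrm2_ge0 _) (jnrm2_ge0 _ _) nrm2_Fw_le gradQ_sqr_le.
Qed.

Lemma beta_sqr_gradQ_le : beta ^+ 2 * jnrm2 Qw Qa <= weight_bound L M delta.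
Proof.
apply: le_trans (dual_weight_sqr_le delta_ge0 (jnrm2_ge0 _ _) (nrm2_ge0 _) dot_gradQ_sqr_le) _.
have LeM : L * e * M <= L * M.
  by rewrite -mulrA; apply: ler_wpM2l; [exact: ltW | exact: ler_piMl].
have N_le : delta ^+ 2 * jnrm2 Qw Qa <= delta ^+ 2 * (L * M) ^+ 2.
  apply: ler_wpM2l; first exact: sqr_ge0.
  apply: le_trans gradQ_sqr_le _.
  by rewrite ler_sqr // qualifE /= !mulr_ge0 // ltW.
have r_le : 2 * delta * `|dotv (Fw w a) Qw| <= 2 * delta * (L * M ^+ 2).
  apply: ler_wpM2l; first exact: mulr_ge0.
  apply: le_trans dot_gradQ_le _.
  by apply: ler_wpM2r; [exact: sqr_ge0 | rewrite -[X in _ <= X]mulr1; apply: ler_wpM2l; [exact: ltW|]].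
have -> : weight_bound L M delta = delta ^+ 2 * (L * M) ^+ 2 + 2 * delta * (L * M ^+ 2) + M ^+ 2.
  by rewrite /weight_bound; ring.
by rewrite !lerD.
Qed.

Local Notation k := (xi * beta).
Local Notation dw := (- (e *: (Fw w a + k *: Qw))).
Local Notation da := (- (h *: (Fa w a + k *: Qa))).

Let beta_ge0 : 0 <= beta.
Proof. exact: dual_weight_ge0. Qed.

Lemma corr_sqr_gradQ_le : k ^+ 2 * jnrm2 Qw Qa <= weight_bound L M delta.
Proof.
apply: le_trans beta_sqr_gradQ_le; apply: ler_wpM2r; first exact: jnrm2_ge0.
by rewrite ler_sqr ?qualifE /= ?mulr_ge0 // ler_piMl.
Qed.

Lemma dot_dw_le :
  dotv (Fw w a) dw <= - (e * (1 - xi) * nrm2 (Fw w a)) + e ^+ 2 * (delta * L * M ^+ 2).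
Proof.
have := dual_weight_dot_ge delta_ge0 (jnrm2_ge0 _ _) (nrm2_ge0 _) dot_gradQ_sqr_le
  (introT andP (conj xi_ge0 xi_le1)).
rewrite -/(nrm2 _) => dot_ge.
have r_le : delta * `|dotv (Fw w a) Qw| <= e * (delta * L * M ^+ 2).
  have -> : e * (delta * L * M ^+ 2) = delta * (L * e * M ^+ 2) by ring.
  by rewrite ler_wpM2l // dot_gradQ_le.
have e_dot := ler_wpM2l e_ge0 dot_ge.
have e_r : e * (delta * `|dotv (Fw w a) Qw|) <= e ^+ 2 * (delta * L * M ^+ 2).
  by rewrite expr2 -mulrA ler_wpM2l.
rewrite dotvNr dotvZr dotvDr dotvZr -/(nrm2 _) beta_barE.
rewrite mulrBr mulrA in e_dot; lra.
Qed.

Let nrm2_Fa_le : nrm2 (Fa w a) <= M ^+ 2.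
Proof. exact: le_trans (jnrm2_ge_r _ _) (jnrm_le (FM w a)). Qed.

Let corr_Qw_le : k ^+ 2 * nrm2 Qw <= weight_bound L M delta.
Proof. exact: le_trans (ler_wpM2l (sqr_ge0 _) (jnrm2_ge_l _ _)) corr_sqr_gradQ_le. Qed.

Let corr_Qa_le : k ^+ 2 * nrm2 Qa <= weight_bound L M delta.
Proof. exact: le_trans (ler_wpM2l (sqr_ge0 _) (jnrm2_ge_r _ _)) corr_sqr_gradQ_le. Qed.

Lemma dot_da_le : dotv (Fa w a) da <= h * weight_bound L M delta.
Proof.
have := dotv_amgm (- k) (Fa w a) Qa; rewrite sqrrN => amgm.
have := nrm2_ge0 (Fa w a); have := mulr_ge0 (sqr_ge0 k) (nrm2_ge0 Qa) => kQ_ge0 nFa_ge0.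
rewrite dotvNr dotvZr dotvDr dotvZr -/(nrm2 _) -mulrN ler_wpM2l //.
rewrite mulrN mulNr -mulrA in amgm.
move: amgm kQ_ge0 nFa_ge0 corr_Qa_le; set nv := nrm2 _; lra.
Qed.

Lemma step_sqr_le : jnrm2 dw da <= (e ^+ 2 + h) * (2 * (M ^+ 2 + weight_bound L M delta)).
Proof.
have dir_le (n : nat) (x y : 'rV[R]_n) : nrm2 (x + k *: y) <= 2 * nrm2 x + 2 * (k ^+ 2 * nrm2 y).
  by rewrite -nrm2Z nrm2D_le.
have dw_le : nrm2 (Fw w a + k *: Qw) <= 2 * (M ^+ 2 + weight_bound L M delta).
  by apply: le_trans (dir_le _ _ _) _; rewrite mulrDr lerD ?ler_wpM2l.
have da_le : nrm2 (Fa w a + k *: Qa) <= 2 * (M ^+ 2 + weight_bound L M delta).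
  by apply: le_trans (dir_le _ _ _) _; rewrite mulrDr lerD ?ler_wpM2l.
have h2_le : h ^+ 2 <= h by rewrite expr2 ler_piMl.
rewrite /jnrm2 !nrm2N !nrm2Z mulrDl lerD //; first by rewrite ler_wpM2l ?sqr_ge0.
apply: le_trans (ler_wpM2l (sqr_ge0 h) da_le) _.
by rewrite ler_wpM2r // mulr_ge0 // addr_ge0 ?sqr_ge0 // /weight_bound sqr_ge0.
Qed.

Lemma ebomlc_step_le :
  F (ebomlc_w Fw Gw Ga delta xi e w a) (ebomlc_a Fw Fa Gw Ga delta xi e h w a)
  <= F w a - e * (1 - xi) * nrm2 (Fw w a) + (e ^+ 2 + h) * step_const L M delta.
Proof.
apply: le_trans (descent_lemma w a dw da gradF L_gt0 lipF) _.
have := ler_wpM2l (ltW L_gt0) step_sqr_le; have := dot_dw_le; have := dot_da_le.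
have B_ge0 : 0 <= weight_bound L M delta by apply: sqr_ge0.
have dLM_ge0 : 0 <= delta * L * M ^+ 2 by rewrite !mulr_ge0 ?sqr_ge0 // ltW.
have := mulr_ge0 h_ge0 dLM_ge0; have := mulr_ge0 (sqr_ge0 e) B_ge0.
rewrite /step_const; lra.
Qed.

End Step.

Lemma telescope_sum_le (R : realFieldType) (f g : nat -> R) (d K : R) (T : nat) :
  (forall t, (1 <= t)%N -> f t.+1 <= f t - d * g t + K) ->
  d * \sum_(1 <= t < T.+1) g t <= f 1%N - f T.+1 + T%:R * K.
Proof.
move=> step; elim: T => [|T IH]; first by rewrite big_geq // mulr0 subrr mul0r addr0.
rewrite big_nat_recr //= mulrDr -[T.+1]addn1 natrD mulrDl mul1r addn1.
have := step T.+1 isT; lra.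
Qed.

Lemma bigmin_mul_le_sum (R : realDomainType) (g : nat -> R) (x0 : R) (m n : nat) :
  \big[Num.min/x0]_(m <= t < n) g t * (n - m)%:R <= \sum_(m <= t < n) g t.
Proof.
rewrite mulr_natr -sumr_const_nat; apply: ler_sum_nat => t mtn.
by apply: ge_bigmin_seq => //; rewrite mem_index_iota.
Qed.

Theorem theorem1 (R : realType) :
  exists Hc : R -> R -> R -> R -> R -> R -> R -> R,
  forall (p q : nat)
    (F G : 'rV[R]_p -> 'rV[R]_q -> R)
    (Fw : 'rV[R]_p -> 'rV[R]_q -> 'rV[R]_p) (Fa : 'rV[R]_p -> 'rV[R]_q -> 'rV[R]_q)
    (Gw : 'rV[R]_p -> 'rV[R]_q -> 'rV[R]_p) (Ga : 'rV[R]_p -> 'rV[R]_q -> 'rV[R]_q)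
    (L M delta xi c C : R),
    (* (A1) *)
    has_grad F Fw Fa -> has_grad G Gw Ga -> 0 < L ->
    grad_lipschitz Fw Fa L -> grad_lipschitz Gw Ga L ->
    (* (A2) *)
    (forall w a, `|F w a| <= M) -> (forall w a, `|G w a| <= M) ->
    (forall w a, jnrm (Fw w a) (Fa w a) <= M) ->
    (forall w a, jnrm (Gw w a) (Ga w a) <= M) ->
    0 < delta -> 0 < xi -> xi < 1 -> 0 < c -> 0 < C ->
  forall (T : nat) (w : nat -> 'rV[R]_p) (a : nat -> 'rV[R]_q),
    (1 <= T)%N ->
    c / T%:R < 1 ->
    C / Num.sqrt T%:R < Num.min ((1 - xi) / L) 1 ->
    (forall t : nat, (1 <= t)%N ->
       w t.+1 = ebomlc_w Fw Gw Ga delta xi (C / Num.sqrt T%:R) (w t) (a t) /\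
       a t.+1 = ebomlc_a Fw Fa Gw Ga delta xi (C / Num.sqrt T%:R) (c / T%:R) (w t) (a t)) ->
    \big[Num.min/nrm2 (Fw (w 1%N) (a 1%N))]_(1 <= t < T.+1) nrm2 (Fw (w t) (a t))
      <= Hc M L delta xi c C (F (w 1%N) (a 1%N)) / Num.sqrt T%:R.
Proof.
exists (fun M L delta xi c C F1 => (F1 + M + (C ^+ 2 + c) * step_const L M delta) / ((1 - xi) * C)).
move=> p q F G Fw Fa Gw Ga L M delta xi c C gradF _ L_gt0 lipF lipG FM _ FwM GwM delta_gt0 xi_gt0
  xi_lt1 c_gt0 C_gt0 T w a T_ge1 h_lt1 e_lt iter.
have T_gt0 : 0 < T%:R :> R by rewrite ltr0n.
have sqrtT_gt0 : 0 < Num.sqrt T%:R :> R by rewrite sqrtr_gt0.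
have sqrtT_sqr : Num.sqrt T%:R ^+ 2 = T%:R :> R by rewrite sqr_sqrtr // ler0n.
move: sqrtT_gt0 sqrtT_sqr e_lt iter; set s := Num.sqrt _ => s_gt0 s_sqr e_lt iter.
set e := C / s; set h := c / T%:R; set K := step_const L M delta.
have e_gt0 : 0 < e by rewrite divr_gt0.
have e_lt1 : e < 1 by move: e_lt; rewrite lt_min => /andP[].
have h_gt0 : 0 < h by rewrite divr_gt0.
have step t : (1 <= t)%N ->
    F (w t.+1) (a t.+1) <= F (w t) (a t) - e * (1 - xi) * nrm2 (Fw (w t) (a t)) + (e ^+ 2 + h) * K.
  move=> t_ge1; have [-> ->] := iter t t_ge1.
  by apply: ebomlc_step_le; rewrite ?ltW.
have := @telescope_sum_le _ (fun t => F (w t) (a t)) (fun t => nrm2 (Fw (w t) (a t))) _ _ T step.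
have := bigmin_mul_le_sum (fun t => nrm2 (Fw (w t) (a t))) (nrm2 (Fw (w 1%N) (a 1%N))) 1 T.+1.
rewrite subn1 /=.
set m := \big[Num.min/_]_(1 <= t < T.+1) _; set S := \sum_(1 <= t < T.+1) _ => mT_le_S S_le.
have /andP[FT_ge _] : - M <= F (w T.+1) (a T.+1) <= M by rewrite -ler_norml.
have mT_e : m * s * ((1 - xi) * C) = e * (1 - xi) * (m * T%:R).
  by rewrite /e -s_sqr; field; rewrite gt_eqF.
have TK : T%:R * ((e ^+ 2 + h) * K) = (C ^+ 2 + c) * K.
  by rewrite /e /h -s_sqr; field; rewrite gt_eqF.
have xi_compl_ge0 : 0 <= 1 - xi by rewrite subr_ge0 ltW.
have := ler_wpM2l (mulr_ge0 (ltW e_gt0) xi_compl_ge0) mT_le_S.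
rewrite -mT_e ler_pdivlMr // ler_pdivlMr ?mulr_gt0 ?subr_gt0 //.
lra.
Qed.
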